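(* Let $\mathcal F$ be a Grothendieck topology on a finite monoid $M$. Then there is a two-sided ideal $\mathfrak m$ of $M$ with $\mathfrak m^2=\mathfrak m$ such that $\mathcal F=\mathcal F_{\mathfrak m}:=\{\mathfrak a \text{ right ideal}\mid \mathfrak m\subseteq\mathfrak a\}$.
   Context: Right ideals may be empty. $\mathfrak m^2=\{xy\mid x,y\in\mathfrak m\}$. For a right ideal $\mathfrak a$ and $m\in M$, $(\mathfrak a:m)=\{x\in M\mid mx\in\mathfrak a\}$. A Grothendieck topology on $M$ is a set $\mathcal F$ of right ideals such that (T1) $M\in\mathcal F$; (T2) $\mathfrak a\in\mathcal F$, $m\in M$ imply $(\mathfrak a:m)\in\mathcal F$; (T3) if $\mathfrak b\in\mathcal F$ and $\mathfrak a$ is a right ideal with $(\mathfrak a:b)\in\mathcal F$ for all $b\in\mathfrak b$, then $\mathfrak a\in\mathcal F$. *)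

From mathcomp Require Import all_boot.
Set Implicit Arguments. Unset Strict Implicit. Unset Printing Implicit Defensive.

(* A finite monoid is given by a finType T with an operation mul and unit one,
   subject to the monoid axioms (stated as hypotheses of the theorem).
   Subsets of M are finite sets {set T}. *)
Section MonoidDefs.
Variables (T : finType) (mul : T -> T -> T).

Definition right_ideal (a : {set T}) : bool :=
  [forall x, forall m, (x \in a) ==> (mul x m \in a)].
Definition left_ideal (a : {set T}) : bool :=
  [forall x, forall m, (x \in a) ==> (mul m x \in a)].
Definition two_sided_ideal (a : {set T}) : bool := right_ideal a && left_ideal a.

Definition ideal_quot (a : {set T}) (m : T) : {set T} := [set x | mul m x \in a].

Definition ideal_sq (m : {set T}) : {set T} := [set mul x y | x in m, y in m].

Definition grothendieck_topology (F : {set {set T}}) : Prop :=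
  [/\ (forall a, a \in F -> right_ideal a),
      setT \in F,
      (forall a m, a \in F -> ideal_quot a m \in F) &
      (forall b a, b \in F -> right_ideal a ->
         (forall y, y \in b -> ideal_quot a y \in F) -> a \in F)].

Definition topology_of (m : {set T}) : {set {set T}} :=
  [set a | right_ideal a && (m \subset a)].
End MonoidDefs.

From mathcomp Require Import all_boot.

(* Two easy consequences of the axioms come first: F is closed upwards
   (if a ∈ F and a ⊆ c then every quotient (c : y), y ∈ a, is all of M, so
   c ∈ F by (T3)) and closed under binary intersections (apply (T3) with
   b ∈ F, since (a ∩ b : y) = (a : y) for y ∈ b).  As M is finite, the
   intersection m of all members of F therefore lies in F, and then F is
   exactly the set of right ideals containing m.  It remains to see that m
   is a two-sided idempotent ideal: it is a left ideal because every
   quotient (m : y) lies in F, hence contains m; and m ⊆ m², because m² is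
   a right ideal whose quotients (m² : y), y ∈ m, contain m, so m² ∈ F by
   (T3). *)

Section RightIdeals.
Set Implicit Arguments.
Unset Strict Implicit.
Variables (T : finType) (mul : T -> T -> T).
Hypothesis mulA : associative mul.

Lemma right_idealP (a : {set T}) :
  reflect (forall x y, x \in a -> mul x y \in a) (right_ideal mul a).
Proof.
apply: (iffP forallP) => [ra x y xa | ra x].
  by have /forallP/(_ y)/implyP := ra x; apply.
by apply/forallP => y; apply/implyP => xa; apply: ra.
Qed.

Lemma right_ideal_quot (a : {set T}) (y : T) :
  right_ideal mul a -> right_ideal mul (ideal_quot mul a y).
Proof.
move/right_idealP=> ra; apply/right_idealP => x z; rewrite !inE => yxa.
by rewrite mulA; apply: ra.
Qed.

Lemma ideal_quot_setT (c : {set T}) (y : T) :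
  right_ideal mul c -> y \in c -> ideal_quot mul c y = setT.
Proof.
by move/right_idealP=> rc yc; apply/setP => x; rewrite !inE rc.
Qed.

Lemma ideal_sq_right_ideal (m : {set T}) :
  right_ideal mul m -> right_ideal mul (ideal_sq mul m).
Proof.
move/right_idealP=> rm; apply/right_idealP => _ z /imset2P[u v um vm ->].
by rewrite -mulA; apply/imset2P; exists u (mul v z); rewrite ?rm.
Qed.

Lemma ideal_sq_sub (m : {set T}) :
  right_ideal mul m -> ideal_sq mul m \subset m.
Proof.
by move/right_idealP=> rm; apply/subsetP => _ /imset2P[u v um vm ->]; apply: rm.
Qed.

End RightIdeals.

Section GrothendieckTopology.
Set Implicit Arguments.
Unset Strict Implicit.
Variables (T : finType) (mul : T -> T -> T).
Hypothesis mulA : associative mul.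
Variable F : {set {set T}}.
Hypothesis HF : grothendieck_topology mul F.

Let F_right_ideal a : a \in F -> right_ideal mul a.
Proof. by case: HF => ri _ _ _; apply: ri. Qed.
Let F_setT : setT \in F. Proof. by case: HF. Qed.
Let F_quot a y : a \in F -> ideal_quot mul a y \in F.
Proof. by case: HF => _ _ quot _; apply: quot. Qed.
Let F_local b a : b \in F -> right_ideal mul a ->
  (forall y, y \in b -> ideal_quot mul a y \in F) -> a \in F.
Proof. by case: HF => _ _ _ local; apply: local. Qed.

Lemma topology_upward (a c : {set T}) :
  a \in F -> right_ideal mul c -> a \subset c -> c \in F.
Proof.
move=> aF rc ac; apply: (F_local aF rc) => y ya.
by rewrite ideal_quot_setT // (subsetP ac).
Qed.

(* Closure under binary intersection, via (T3) with b as covering ideal. *)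
Lemma topology_setI (a b : {set T}) : a \in F -> b \in F -> a :&: b \in F.
Proof.
move=> aF bF; have /right_idealP ra := F_right_ideal aF.
have /right_idealP rb := F_right_ideal bF.
apply: (F_local bF).
  by apply/right_idealP => x y /setIP[xa xb]; rewrite inE ra ?rb.
move=> y yb; suff -> : ideal_quot mul (a :&: b) y = ideal_quot mul a y.
  exact: F_quot.
by apply/setP => x; rewrite !inE rb // andbT.
Qed.

Definition topology_core : {set T} := \bigcap_(a in F) a.

Lemma topology_core_in : topology_core \in F.
Proof. exact: (big_ind (fun s => s \in F) F_setT topology_setI). Qed.

Lemma topology_core_sub (a : {set T}) : a \in F -> topology_core \subset a.
Proof. exact: bigcap_inf. Qed.

Lemma topology_core_right_ideal : right_ideal mul topology_core.
Proof. exact: F_right_ideal topology_core_in. Qed.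

Lemma topology_core_left_ideal : left_ideal mul topology_core.
Proof.
apply/forallP => x; apply/forallP => y; apply/implyP => xm.
have /subsetP/(_ x xm) := topology_core_sub (F_quot y topology_core_in).
by rewrite inE.
Qed.

(* m = m²: the quotients (m² : y), y ∈ m, contain m, so m² ∈ F by (T3). *)
Lemma topology_core_idem : ideal_sq mul topology_core = topology_core.
Proof.
have rm := topology_core_right_ideal.
apply/eqP; rewrite eqEsubset ideal_sq_sub //=.
apply: topology_core_sub; apply: (F_local topology_core_in).
  exact: ideal_sq_right_ideal.
move=> y ym; apply: (topology_upward topology_core_in).
  exact/right_ideal_quot/ideal_sq_right_ideal.
by apply/subsetP => x xm; rewrite inE; apply/imset2P; exists y x.
Qed.

Lemma topology_core_spec : F = topology_of mul topology_core.
Proof.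
apply/setP => a; rewrite inE; apply/idP/andP => [aF | [ra ma]].
  by split; [apply: F_right_ideal | apply: topology_core_sub].
exact: (topology_upward topology_core_in).
Qed.

End GrothendieckTopology.

Theorem proposition4p3 (T : finType) (mul : T -> T -> T) (one : T)
  (mulA : associative mul) (mul1 : left_id one mul) (mul1r : right_id one mul)
  (F : {set {set T}}) (HF : grothendieck_topology mul F) :
  exists m : {set T},
    [/\ two_sided_ideal mul m, ideal_sq mul m = m & F = topology_of mul m].
Proof.
exists (topology_core F); split.
- by rewrite /two_sided_ideal (topology_core_right_ideal HF)
             (topology_core_left_ideal HF).
- exact: topology_core_idem.
- exact: topology_core_spec HF.
Qed.
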